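(* Let $n\ge 1$, let $(x_1,y_1),\dots,(x_n,y_n)\in\mathbb{R}^p\times\mathbb{R}$ and $x_{n+1}\in\mathbb{R}^p$. For every $z\in\mathbb{R}$ let $\mu_z:\mathbb{R}^p\to\mathbb{R}$ be a prediction function, and let $S:\mathbb{R}\times\mathbb{R}\to\mathbb{R}$ be a score function. Define $E_i(z)=S(y_i,\mu_z(x_i))$ for $i\in\{1,\dots,n\}$, $E_{n+1}(z)=S(z,\mu_z(x_{n+1}))$, and $$\pi(z)=1-\frac{1}{n+1}\sum_{i=1}^{n+1}\mathbb{1}_{E_i(z)\le E_{n+1}(z)}.$$ Assume the family $(\mu_z)_{z\in\mathbb{R}}$ is stable: there are constants $\tau_1,\dots,\tau_{n+1}\ge 0$ such that for every $i\in\{1,\dots,n+1\}$ and all $z,z_0,q\in\mathbb{R}$, $$|S(q,\mu_z(x_i))-S(q,\mu_{z_0}(x_i))|\le\tau_i.$$ For $z,\hat z\in\mathbb{R}$ define, for $i\in\{1,\dots,n\}$, $L_i(z,\hat z)=E_i(\hat z)-\tau_i$ and $U_i(z,\hat z)=E_i(\hat z)+\tau_i$, and $L_{n+1}(z,\hat z)=S(z,\mu_{\hat z}(x_{n+1}))-\tau_{n+1}$, $U_{n+1}(z,\hat z)=S(z,\mu_{\hat z}(x_{n+1}))+\tau_{n+1}$. Let $$\pi_{\rm lo}(z,\hat z)=1-\frac{1}{n+1}\sum_{i=1}^{n+1}\mathbb{1}_{L_i(z,\hat z)\le U_{n+1}(z,\hat z)},\qquad \pi_{\rm up}(z,\hat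 z)=1-\frac{1}{n+1}\sum_{i=1}^{n+1}\mathbb{1}_{U_i(z,\hat z)\le L_{n+1}(z,\hat z)}.$$ Then for all $z,\hat z\in\mathbb{R}$, $\pi_{\rm lo}(z,\hat z)\le\pi(z)\le\pi_{\rm up}(z,\hat z)$.
   Context: $\mathbb{1}_A$ denotes the indicator of the event/condition $A$. In the paper, $\mu_z$ is the model fitted on the augmented data $\{(x_1,y_1),\dots,(x_n,y_n),(x_{n+1},z)\}$, and $\pi(z)$ equals $1-\mathrm{Rank}(E_{n+1}(z))/(n+1)$, where $\mathrm{Rank}(u_j)=\sum_i \mathbb{1}_{u_i\le u_j}$ over the set $\{E_1(z),\dots,E_{n+1}(z)\}$. *)

From mathcomp Require Import all_boot all_order all_algebra.
From mathcomp Require Import reals.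
Set Implicit Arguments. Unset Strict Implicit. Unset Printing Implicit Defensive.
Import Order.TTheory GRing.Theory Num.Theory.
Local Open Scope ring_scope.

(* Indices 1..n+1 are represented by 'I_n.+1 ; index n+1 is [ord_max],
   indices 1..n are [widen_ord (leqnSn n) j] for j : 'I_n. *)

Section Conformal.
Variables (R : realType) (p n : nat).
Variables (x : 'I_n.+1 -> 'rV[R]_p) (y : 'I_n -> R)
          (mu : R -> 'rV[R]_p -> R) (S : R -> R -> R).

Definition lab (z : R) (i : 'I_n.+1) : R :=
  match unlift ord_max i with Some j => y j | None => z end.

Definition confE (z : R) (i : 'I_n.+1) : R := S (lab z i) (mu z (x i)).

Definition conf_pi (z : R) : R :=
  1 - (n.+1%:R)^-1 * \sum_(i < n.+1) ((confE z i <= confE z ord_max))%R%:R.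

Definition stable (tau : 'I_n.+1 -> R) : Prop :=
  (forall i, 0 <= tau i) /\
  forall i z z0 q, `|S q (mu z (x i)) - S q (mu z0 (x i))| <= tau i.

Definition confL (tau : 'I_n.+1 -> R) (z zh : R) (i : 'I_n.+1) : R :=
  S (lab z i) (mu zh (x i)) - tau i.
Definition confU (tau : 'I_n.+1 -> R) (z zh : R) (i : 'I_n.+1) : R :=
  S (lab z i) (mu zh (x i)) + tau i.

Definition pi_lo (tau : 'I_n.+1 -> R) (z zh : R) : R :=
  1 - (n.+1%:R)^-1 *
      \sum_(i < n.+1) ((confL tau z zh i <= confU tau z zh ord_max))%R%:R.
Definition pi_up (tau : 'I_n.+1 -> R) (z zh : R) : R :=
  1 - (n.+1%:R)^-1 *
      \sum_(i < n.+1) ((confU tau z zh i <= confL tau z zh ord_max))%R%:R.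
End Conformal.

(* Stability says that refitting the model on a different candidate moves each
   score E_i by at most tau_i, so L_i <= E_i(z) <= U_i.  Hence
   E_i <= E_{n+1} forces L_i <= U_{n+1}, and U_i <= L_{n+1} forces
   E_i <= E_{n+1}; since the p-value is antitone in the set of indicators that
   fire, this sandwiches pi(z) between pi_lo and pi_up. *)
From mathcomp Require Import all_boot all_order all_algebra.
From mathcomp Require Import reals.
Import Order.TTheory GRing.Theory Num.Theory.
Local Open Scope ring_scope.

Lemma ler_nat_bool (R : numDomainType) (b1 b2 : bool) :
  (b1 -> b2) -> (b1%:R : R) <= b2%:R.
Proof. by rewrite ler_nat; case: b1; case: b2 => // /(_ isT). Qed.

Lemma rank_pvalue_le (R : numFieldType) (m : nat) (F G : 'I_m -> bool) :
  (forall i, F i -> G i) ->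
  1 - m%:R^-1 * \sum_(i < m) ((G i)%:R : R) <=
  1 - m%:R^-1 * \sum_(i < m) ((F i)%:R : R).
Proof.
move=> FG; rewrite lerD2l lerN2 ler_wpM2l ?invr_ge0 //.
by apply: ler_sum => i _; apply/ler_nat_bool/FG.
Qed.

Lemma confE_between {R : realType} {p n : nat}
    {x : 'I_n.+1 -> 'rV[R]_p} (y : 'I_n -> R)
    {mu : R -> 'rV[R]_p -> R} {S : R -> R -> R} {tau : 'I_n.+1 -> R} :
  stable x mu S tau -> forall z zh i,
  confL x y mu S tau z zh i <= confE x y mu S z i <= confU x y mu S tau z zh i.
Proof. by move=> [_ stab] z zh i; rewrite -ler_distl stab. Qed.

Theorem proposition3p2 (R : realType) (p n : nat) (n_ge1 : (1 <= n)%N)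
  (x : 'I_n.+1 -> 'rV[R]_p) (y : 'I_n -> R)
  (mu : R -> 'rV[R]_p -> R) (S : R -> R -> R) (tau : 'I_n.+1 -> R) :
  stable x mu S tau ->
  forall z zh : R,
    pi_lo x y mu S tau z zh <= conf_pi x y mu S z <= pi_up x y mu S tau z zh.
Proof.
move=> stab z zh; have bounds := confE_between y stab z zh.
have /andP[Lmax_le_Emax Emax_le_Umax] := bounds ord_max.
apply/andP; split; apply: rank_pvalue_le => i.
- have /andP[Li_le_Ei _] := bounds i.
  by move=> Ei_le_Emax; apply: le_trans Li_le_Ei (le_trans Ei_le_Emax _).
- have /andP[_ Ei_le_Ui] := bounds i.
  by move=> Ui_le_Lmax; apply: le_trans Ei_le_Ui (le_trans Ui_le_Lmax _).
Qed.
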